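(* Let $\rho \in (-\tfrac{1}{3},0)\cup (0,1)$ and let $\{a_t\}_{t\ge0}$, $\{b_t\}_{t\ge0}$ be sequences satisfying $a_0=b_0=0$, $a_1=b_1$, and $a_{t+1} = \rho(2a_t -a_{t-1}) + b_t - b_{t-1}$ for all $t\geq 1$. Set $\beta_s=b_s-b_{s-1}$, $u=\rho+\sqrt{\rho^2-\rho}$ and $v=\rho-\sqrt{\rho^2-\rho}$ (complex numbers when $0<\rho<1$). Then for all $t\ge0$, $$a_{t+1} = a_1\,\frac{u^{t+1}-v^{t+1}}{u-v} + \sum_{s=1}^t\beta_s\,\frac{u^{t-s+1}-v^{t-s+1}}{u-v}.$$ Moreover, if $0<\rho<1$, then with $\theta=\arccos(\sqrt{\rho})$, for all $t\ge0$, $$a_{t+1}\sin{\theta} = a_1\rho^{t/2}\sin{[(t+1)\theta]} + \sum_{s=1}^t\beta_s\rho^{(t-s)/2}\sin{[(t+1-s)\theta]}.$$ *)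

From HB Require Import structures.
From mathcomp Require Import all_boot all_order all_algebra.
From mathcomp Require Import complex.
From mathcomp Require Import all_classical all_reals all_analysis.

(* Both formulas are instances of a discrete Duhamel principle for the
   recurrence w_(n+2) = 2 rho w_(n+1) - rho w_n: if w solves it with w_0 = 0,
   then a_(t+1) w_1 = a_1 w_(t+1) + sum_(s=1..t) beta_s w_(t+1-s), because the
   difference of the two sides solves the same recurrence with zero initial
   values.  The first formula takes for w the Lucas sequence (u^n - v^n)/(u - v)
   of the roots u, v of x^2 - 2 rho x + rho.  For 0 < rho < 1 these roots are
   sqrt rho e^(+-i theta), and the second formula takes w_n =
   rho^((n-1)/2) sin (n theta), which is that Lucas sequence times sin theta. *)

From HB Require Import structures.
From mathcomp Require Import all_boot all_order all_algebra.
From mathcomp Require Import complex.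
From mathcomp Require Import all_classical all_reals all_analysis.
From mathcomp Require Import ring.
Import Order.TTheory GRing.Theory Num.Theory.
Local Open Scope ring_scope.
Local Open Scope complex_scope.

Set Implicit Arguments.
Unset Strict Implicit.

Section SecondOrderRecurrence.
Variables (K : comNzRingType) (p q : K).

Definition rec2 (w : nat -> K) := forall n, w n.+2 = p * w n.+1 + q * w n.

Lemma rec2_eq0 (w : nat -> K) : rec2 w -> w 0%N = 0 -> w 1%N = 0 ->
  forall n, w n = 0.
Proof.
move=> hw w0 w1 n.
suff [] : w n = 0 /\ w n.+1 = 0 by [].
by elim: n => [|n [IHn IHn1]] //; rewrite hw IHn IHn1 !mulr0 addr0.
Qed.

Lemma rec2_pow (x : K) : x ^+ 2 = p * x + q -> rec2 (fun n => x ^+ n).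
Proof. by move=> hx n; rewrite -addn2 exprD hx exprS; ring. Qed.

Definition convol (f w : nat -> K) t := \sum_(1 <= s < t) f s * w (t - s)%N.

Lemma convol_rec2 (f w : nat -> K) : rec2 w -> w 0%N = 0 -> forall t,
  convol f w t.+2 = p * convol f w t.+1 + q * convol f w t + f t.+1 * w 1%N.
Proof.
move=> hw w0 t; rewrite /convol big_nat_recr //= subSnn.
have -> : \sum_(1 <= s < t) f s * w (t - s)%N
          = \sum_(1 <= s < t.+1) f s * w (t - s)%N.
  case: t => [|t]; first by rewrite !big_geq.
  by rewrite [RHS]big_nat_recr //= subnn w0 mulr0 addr0.
rewrite !mulr_sumr -big_split /=; congr (_ + _); apply: eq_big_nat => s /andP[_].
by rewrite ltnS => hs; rewrite !subSn ?(leqW hs) // hw; ring.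
Qed.

Lemma rec2_duhamel (A f w : nat -> K) : rec2 w -> w 0%N = 0 -> A 0%N = 0 ->
    (forall n, A n.+2 = p * A n.+1 + q * A n + f n.+1) ->
  forall t, A t.+1 * w 1%N
            = A 1%N * w t.+1 + \sum_(1 <= s < t.+1) f s * w (t - s).+1.
Proof.
move=> hw w0 A0 hA t.
pose D t := A t * w 1%N - A 1%N * w t - convol f w t.
have hD : rec2 D by move=> n; rewrite /D convol_rec2 // hA hw; ring.
have D0 : D 0%N = 0 by rewrite /D A0 w0 /convol big_geq //; ring.
have D1 : D 1%N = 0 by rewrite /D /convol big_geq //; ring.
have /eqP := rec2_eq0 hD D0 D1 t.+1.
rewrite /D subr_eq0 subr_eq => /eqP ->; rewrite addrC; congr (_ + _).
by apply: eq_big_nat => s /andP[_ hs]; rewrite subSn // -ltnS.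
Qed.

End SecondOrderRecurrence.

Section LucasSequence.
Variables (F : fieldType) (u v : F).

Definition lucas_seq n := (u ^+ n - v ^+ n) / (u - v).

Lemma lucas_seq0 : lucas_seq 0 = 0.
Proof. by rewrite /lucas_seq subrr mul0r. Qed.

Lemma lucas_seq1 : u != v -> lucas_seq 1 = 1.
Proof. by move=> uv; rewrite /lucas_seq !expr1 divff // subr_eq0. Qed.

Lemma rec2_lucas_seq (p q : F) : u ^+ 2 = p * u + q -> v ^+ 2 = p * v + q ->
  rec2 p q lucas_seq.
Proof. by move=> hu hv n; rewrite /lucas_seq (rec2_pow hu) (rec2_pow hv); ring. Qed.

End LucasSequence.

Lemma rec2_lucas_seq_roots (F : fieldType) (c s : F) : s ^+ 2 = c ^+ 2 - c ->
  rec2 (2 * c) (- c) (lucas_seq (c + s) (c - s)).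
Proof.
by move=> hs; apply: rec2_lucas_seq; [rewrite sqrrD | rewrite sqrrB]; rewrite hs; ring.
Qed.

Section DampedSine.
Variable R : realType.

Lemma rec2_sin (x : R) : rec2 (2 * cos x) (-1) (fun n => sin (n%:R * x)).
Proof.
move=> n; set y := n.+1%:R * x.
have -> : n.+2%:R * x = y + x by rewrite /y -addn1 natrD mulrDl mul1r.
have -> : n%:R * x = y - x by rewrite /y -addn1 natrD mulrDl mul1r addrK.
by rewrite sinD sinB; ring.
Qed.

Definition damped_sin (r x : R) n := r ^+ n.-1 * sin (n%:R * x).

Lemma damped_sin0 r x : damped_sin r x 0 = 0.
Proof. by rewrite /damped_sin mul0r sin0 mulr0. Qed.

Lemma damped_sin1 r x : damped_sin r x 1 = sin x.
Proof. by rewrite /damped_sin /= expr0 !mul1r. Qed.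

Lemma rec2_damped_sin r x :
  rec2 (2 * r * cos x) (- r ^+ 2) (damped_sin r x).
Proof.
move=> n; rewrite /damped_sin rec2_sin.
by case: n => [|n] /=; [rewrite mul0r sin0; ring | rewrite !exprS; ring].
Qed.

End DampedSine.

Theorem lemma3 (R : realType) (rho : R) (a b : nat -> R)
  (hrho : (- (1 / 3) < rho < 0) \/ (0 < rho < 1))
  (ha0 : a 0%N = 0) (hb0 : b 0%N = 0) (hab1 : a 1%N = b 1%N)
  (hrec : forall t : nat, (1 <= t)%N ->
     a t.+1 = rho * (2 * a t - a t.-1) + b t - b t.-1) :
  let beta := fun s : nat => b s - b s.-1 in
  let u : R[i] := rho%:C + sqrtC ((rho ^+ 2 - rho)%:C) in
  let v : R[i] := rho%:C - sqrtC ((rho ^+ 2 - rho)%:C) in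
  (forall t : nat,
     (a t.+1)%:C =
       (a 1%N)%:C * ((u ^+ t.+1 - v ^+ t.+1) / (u - v))
       + \sum_(1 <= s < t.+1)
           (beta s)%:C * ((u ^+ (t - s).+1 - v ^+ (t - s).+1) / (u - v)))
  /\
  (0 < rho < 1 ->
   let theta := acos (Num.sqrt rho) in
   forall t : nat,
     a t.+1 * sin theta =
       a 1%N * rho `^ (t%:R / 2) * sin (t.+1%:R * theta)
       + \sum_(1 <= s < t.+1)
           beta s * rho `^ ((t%:R - s%:R) / 2) * sin ((t.+1 - s)%:R * theta)).
Proof.
move=> beta u v.
have hrec2 n : a n.+2 = 2 * rho * a n.+1 + - rho * a n + beta n.+1.
  by rewrite hrec //= /beta; ring.
have rho0 : rho != 0.
  by case: hrho => /andP[h1 h2]; [exact: ltr0_neq0 | exact: lt0r_neq0].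
have rho1 : rho != 1.
  by case: hrho => /andP[_ h]; rewrite neq_lt ?(lt_trans h ltr01) ?h.
split.
  pose c : R[i] := rho%:C; pose s := sqrtC ((rho ^+ 2 - rho)%:C).
  have hs : s ^+ 2 = c ^+ 2 - c by rewrite sqrtCK rmorphB rmorphXn.
  have s0 : s != 0.
    have : rho ^+ 2 - rho != 0.
      by rewrite expr2 -{3}[rho]mulr1 -mulrBr mulf_eq0 subr_eq0 negb_or rho0.
    by rewrite sqrtC_eq0; apply: contra => /eqP /(@complexI R) ->.
  have uv : c + s != c - s.
    by rewrite -subr_eq0 (_ : _ - _ = s *+ 2) ?mulrn_eq0 //; ring.
  have hA n : (a n.+2)%:C = 2 * c * (a n.+1)%:C + - c * (a n)%:C + (beta n.+1)%:C.
    by rewrite hrec2 !(rmorphD, rmorphM, rmorphN).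
  have A0 : (a 0%N)%:C = 0 :> R[i] by rewrite ha0.
  move=> t; have := rec2_duhamel (rec2_lucas_seq_roots hs) (lucas_seq0 _ _)
    (A := fun n => (a n)%:C) (f := fun n => (beta n)%:C) A0 hA t.
  by rewrite lucas_seq1 ?mulr1.
move=> /andP[r0 r1] theta t; set r := Num.sqrt rho.
have hr : r ^+ 2 = rho by rewrite sqr_sqrtr // ltW.
have cr : cos theta = r.
  rewrite /theta acosK // in_itv /= (le_trans _ (sqrtr_ge0 rho)) ?lerN10 //=.
  by rewrite -sqrtr1 ler_sqrt // ltW.
have pr k : rho `^ (k%:R / 2) = r ^+ k.
  by rewrite mulrC powRrM powR12_sqrt ?ltW // powR_mulrn.
have hw := rec2_damped_sin r theta; rewrite cr -mulrA -expr2 hr in hw.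
rewrite -[sin theta](damped_sin1 r) (rec2_duhamel hw (damped_sin0 _ _) ha0 hrec2).
rewrite pr -mulrA; congr (_ + _); apply: eq_big_nat => s /andP[_ hs].
have st : (s <= t)%N by rewrite -ltnS.
by rewrite -natrB // pr subSn // mulrA.
Qed.
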